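(* Let $n \ge 3$ and let $(G,c)$ be a metric TSP instance with $n$ cities. Then every 2-optimal tour $T'$ in $G$ satisfies $$c(T') \le \sqrt{\tfrac{n}{2}}\; c(T^* ),$$ where $T^*$ is a shortest tour in $G$. Moreover, this bound is tight: for every positive integer $k$, with $n = 2k^2$, there exist a metric TSP instance with $n$ cities and a 2-optimal tour $T'$ in it such that $c(T') = \sqrt{n/2}\; c(T^* )$ and $c(T^* )>0$.
   Context: A metric TSP instance with $n$ cities consists of a complete undirected graph $G$ on $n$ vertices together with a distance function $c: E(G)\to\mathbb{R}_{\ge 0}$ satisfying the triangle inequality $c(x,y)+c(y,z)\ge c(x,z)$ for all vertices $x,y,z$ (we write $c(x,y)$ for $c(\{x,y\})$, and $c(x,x)=0$). A tour is a cycle in $G$ containing all vertices; its length is $c(T)=\sum_{e\in E(T)}c(e)$, and a shortest tour is a tour of minimum length. Tours are regarded as oriented cycles (each vertex has exactly one incoming and one outgoing edge). For two edges $(a,b)$ and $(x,y)$ of an oriented tour $T$, the 2-change replaces them by $(a,x)$ and $(b,y)$ (reversing the segment from $b$ to $x$), which yields a tour again; it is improving if $c(a,x)+c(b,y) < c(a,b)+c(x,y)$. A tour is 2-optimal if it admits no improving 2-change, i.e. $c(a,x)+c(b,y)\ge c(a,b)+c(x,y)$ for all pairs of edges $(a,b),(x,y)$ of the oriented tour. *)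

From HB Require Import structures.
From mathcomp Require Import all_boot all_order all_algebra all_fingroup.
Set Implicit Arguments. Unset Strict Implicit. Unset Printing Implicit Defensive.
Import Order.TTheory GRing.Theory Num.Theory.
Local Open Scope ring_scope.

Definition metric_tsp (R : realFieldType) (n : nat) (c : 'I_n -> 'I_n -> R) : Prop :=
  (forall x, c x x = 0) /\
  (forall x y, c x y = c y x) /\
  (forall x y, 0 <= c x y) /\
  (forall x y z, c x z <= c x y + c y z).

(* An (oriented) tour is given by a cyclic ordering of the cities:
   t 0 -> t 1 -> ... -> t (n-1) -> t 0.  Its i-th edge is (t i, t (i+1 mod n)). *)
Definition tour_length (R : realFieldType) (n : nat) (c : 'I_n -> 'I_n -> R)
  (t : {perm 'I_n}) : R :=
  \sum_(i < n) c (t i) (t (ordS i)).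

Definition two_optimal (R : realFieldType) (n : nat) (c : 'I_n -> 'I_n -> R)
  (t : {perm 'I_n}) : Prop :=
  forall i j : 'I_n, i != j ->
    c (t i) (t (ordS i)) + c (t j) (t (ordS j))
      <= c (t i) (t j) + c (t (ordS i)) (t (ordS j)).

Definition shortest_tour (R : realFieldType) (n : nat) (c : 'I_n -> 'I_n -> R)
  (t : {perm 'I_n}) : Prop :=
  forall t' : {perm 'I_n}, tour_length c t <= tour_length c t'.

From HB Require Import structures.
From mathcomp Require Import all_boot all_order all_algebra all_fingroup.
From mathcomp Require Import ring lra zify.
Set Implicit Arguments. Unset Strict Implicit. Unset Printing Implicit Defensive.
Import Order.TTheory GRing.Theory Num.Theory.
Local Open Scope ring_scope.

(* Place the cities on a circle of perimeter L* = c(T* ) in the order of a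
   shortest tour T*; by the triangle inequality c(x, y) is at most the arc distance d(x, y).
   Give the city x the radius r(x) = c(x, x'), where x' follows x in T', so that
   c(T') = sum_x r(x).  2-optimality gives r(x) + r(y) <= d(x, y) + d(x', y'), so for every
   point p of the circle the residual radii (r(x) - d(p, x))_+ are the radii of disjoint arcs
   around the points x'.  Hence sum_x (r(x) - d(p, x))_+ <= L*/2, and integrating over p
   gives 2 sum_x r(x)^2 <= L*^2; Cauchy-Schwarz concludes.

   Split the n = 2 k^2 cities into 2 k clusters of k cities; cities in the same
   cluster are at distance 0, clusters of different parity at distance 1, and distinct
   clusters of equal parity at distance 2.  Visiting the clusters in order costs 2 k, and
   every tour enters every cluster.  A tour that alternates parity at every step and
   traverses each ordered pair of clusters of different parity exactly once has length
   2 k^2 = sqrt(n/2) 2 k, and it is 2-optimal since an exchange between two of its edges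
   starting in clusters of equal parity cannot produce two edges of length 0. *)

Ltac split_piecewise :=
  rewrite ?maxEle ?minEle;
  repeat match goal with
  | |- context [`|?x|] =>
      let h := fresh in
      case: (lerP 0 x) => h; [rewrite (ger0_norm h) | rewrite (ltr0_norm h)]
  | |- context [if ?a <= ?b then _ else _] =>
      lazymatch a with context [if _ then _ else _] => fail | _ =>
      lazymatch b with context [if _ then _ else _] => fail | _ =>
      case: (lerP a b) => ? end end
  end.

Section Circle.
Variable R : realFieldType.
Implicit Types (P a b e p x y c r : R).

Definition ramp x := Num.max x 0.

Definition arc_dist P a b := Num.min `|a - b| (P - `|a - b|).

Lemma ramp_ge0 x : 0 <= ramp x.
Proof. by rewrite /ramp le_max lexx orbT. Qed.

Lemma ramp_id x : 0 <= x -> ramp x = x.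
Proof. by move=> x0; rewrite /ramp max_l. Qed.

Lemma ramp_eq0 x : x <= 0 -> ramp x = 0.
Proof. by move=> x0; rewrite /ramp max_r. Qed.

Lemma ramp_le x y : x <= y -> 0 <= y -> ramp x <= y.
Proof. by move=> xy y0; rewrite /ramp ge_max xy. Qed.

Lemma ramp_gt0 x : 0 < ramp x -> ramp x = x.
Proof. rewrite /ramp; split_piecewise => // h; lra. Qed.

Lemma ramp_sqr_incr a b : a <= b -> ramp b ^+ 2 - ramp a ^+ 2 <= (b - a) * (ramp a + ramp b).
Proof. rewrite /ramp !expr2; split_piecewise; nra. Qed.

Lemma arc_distC P a b : arc_dist P a b = arc_dist P b a.
Proof. by rewrite /arc_dist distrC. Qed.

Lemma arc_dist_le_norm P a b : arc_dist P a b <= `|a - b|.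
Proof. by rewrite /arc_dist ge_min lexx. Qed.

Lemma arc_dist_le_wrap P a b : arc_dist P a b <= P - `|a - b|.
Proof. by rewrite /arc_dist ge_min lexx orbT. Qed.

Lemma arc_dist_le_half P a b : 2 * arc_dist P a b <= P.
Proof. rewrite /arc_dist; split_piecewise; lra. Qed.

Lemma le_arc_dist P a b x : x <= `|a - b| -> x <= P - `|a - b| -> x <= arc_dist P a b.
Proof. by move=> h1 h2; rewrite /arc_dist le_min h1 h2. Qed.

Lemma arc_dist_ge0 P a b : 0 <= a <= P -> 0 <= b <= P -> 0 <= arc_dist P a b.
Proof. move=> /andP[? ?] /andP[? ?]; rewrite /arc_dist; split_piecewise; lra. Qed.

Lemma arc_dist_triangle P a b e : 0 <= a <= P -> 0 <= b <= P -> 0 <= e <= P ->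
  arc_dist P a b <= arc_dist P a e + arc_dist P e b.
Proof. move=> /andP[? ?] /andP[? ?] /andP[? ?]; rewrite /arc_dist; split_piecewise; lra. Qed.

Definition tent c r x := ramp (r - `|x - c|).

(* [tent c r] wrapped around the circle [[0, P]]; for [c] in [[0, P]] and [2 r <= P]
   the three translates have disjoint supports on [[0, P]]. *)
Definition circle_tent P c r x := tent c r x + tent (c - P) r x + tent (c + P) r x.

Lemma circle_tent_le P c r p : 0 <= c <= P -> 0 <= p <= P -> 0 <= r -> 2 * r <= P ->
  circle_tent P c r p <= ramp (r - arc_dist P p c).
Proof.
move=> /andP[? ?] /andP[? ?] ? ?; rewrite /circle_tent /tent /arc_dist.
case: (lerP c p) => ?.
- have -> : `|p - (c - P)| = p - c + P by rewrite ger0_norm; lra.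
  have -> : `|p - (c + P)| = c + P - p by rewrite ler0_norm; lra.
  rewrite (ramp_eq0 (x := r - (p - c + P))); last by lra.
  rewrite /ramp; split_piecewise; lra.
- have -> : `|p - (c - P)| = p - c + P by rewrite ger0_norm; lra.
  have -> : `|p - (c + P)| = c + P - p by rewrite ler0_norm; lra.
  rewrite (ramp_eq0 (x := r - (c + P - p))); last by lra.
  rewrite /ramp; split_piecewise; lra.
Qed.

End Circle.

Section Trapezoid.
Variable R : realFieldType.
Implicit Types (a b c r x P : R).

(* The antiderivative of [tent c r] vanishing to the left of its support. *)
Definition tent_prim c r x :=
  if x <= c then ramp (x - (c - r)) ^+ 2 / 2 else r ^+ 2 - ramp (c + r - x) ^+ 2 / 2.

Lemma tent_left c r x : x <= c -> tent c r x = ramp (x - (c - r)).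
Proof. by move=> xc; rewrite /tent ler0_norm ?subr_le0 //; congr ramp; lra. Qed.

Lemma tent_right c r x : c <= x -> tent c r x = ramp (c + r - x).
Proof. by move=> cx; rewrite /tent ger0_norm ?subr_ge0 //; congr ramp; lra. Qed.

Lemma tent_prim_left c r x : x <= c -> tent_prim c r x = ramp (x - (c - r)) ^+ 2 / 2.
Proof. by rewrite /tent_prim => ->. Qed.

Lemma tent_prim_right c r x : 0 <= r -> c <= x ->
  tent_prim c r x = r ^+ 2 - ramp (c + r - x) ^+ 2 / 2.
Proof.
move=> r0 cx; rewrite /tent_prim; case: (lerP x c) => // xc.
have -> : x = c by apply/eqP; rewrite eq_le xc.
rewrite !ramp_id; [|lra|lra]; rewrite !expr2; lra.
Qed.

(* Away from its apex the tent is linear up to a convex kink at its foot,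
   so the trapezoid rule overestimates its integral. *)
Lemma trapezoid_tent c r a b : 0 <= r -> a <= b -> b <= c \/ c <= a ->
  2 * (tent_prim c r b - tent_prim c r a) <= (b - a) * (tent c r a + tent c r b).
Proof.
move=> r0 ab [bc|ca].
- rewrite !tent_prim_left ?tent_left; try lra.
  have := @ramp_sqr_incr _ (a - (c - r)) (b - (c - r)); lra.
- rewrite !tent_prim_right ?tent_right; try lra.
  have := @ramp_sqr_incr _ (c + r - b) (c + r - a); lra.
Qed.

Lemma tent_prim_circle c r P : 0 <= c <= P -> 0 <= r -> 2 * r <= P ->
  (tent_prim c r P - tent_prim c r 0) + (tent_prim (c - P) r P - tent_prim (c - P) r 0)
  + (tent_prim (c + P) r P - tent_prim (c + P) r 0) = r ^+ 2.
Proof.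
move=> /andP[c0 cP] r0 rP.
rewrite (@tent_prim_right c r P) // (@tent_prim_left c r 0) //.
rewrite (@tent_prim_right (c - P) r P) ?(@tent_prim_right (c - P) r 0);
  try lra.
rewrite (@tent_prim_left (c + P) r P) ?(@tent_prim_left (c + P) r 0);
  try lra.
rewrite (ramp_eq0 (x := c - P + r - P)) ?(ramp_eq0 (x := 0 - (c + P - r))); try lra.
have -> : 0 - (c - r) = r - c by lra.
have -> : P - (c + P - r) = r - c by lra.
have -> : c - P + r - 0 = c + r - P by lra.
rewrite !expr2; lra.
Qed.

End Trapezoid.

Definition psum (R : realFieldType) (g : nat -> R) k := \sum_(0 <= j < k) g j.

Section Partition.
Variable R : realFieldType.
Variable g : nat -> R.
Hypothesis g_ge0 : forall k, 0 <= g k.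
Local Notation X := (psum g).

Lemma psum0 : X 0 = 0.
Proof. by rewrite /psum big_geq. Qed.

Lemma psumS k : X k.+1 = X k + g k.
Proof. by rewrite /psum big_nat_recr. Qed.

Lemma psum_le j k : (j <= k)%N -> X j <= X k.
Proof.
move=> /subnK <-; elim: (k - j)%N => [|d IH]; first by rewrite add0n.
by rewrite addSn psumS; have := g_ge0 (d + j); lra.
Qed.

Lemma psum_ge0 k : 0 <= X k.
Proof. by rewrite -psum0; apply: psum_le. Qed.

Lemma trapezoid_tent_sum m c r : 0 <= r ->
  (forall k, (k < m)%N -> X k.+1 <= c \/ c <= X k) ->
  2 * (tent_prim c r (X m) - tent_prim c r 0) <=
  \sum_(0 <= k < m) g k * (tent c r (X k) + tent c r (X k.+1)).
Proof.
move=> r0 apex_node.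
have -> : tent_prim c r 0 = tent_prim c r (X 0) by rewrite psum0.
rewrite -(telescope_sumr (fun k => tent_prim c r (X k))) // mulr_sumr.
apply: ler_sum_nat => k /andP[_ km].
have -> : g k = X k.+1 - X k by rewrite psumS; lra.
by apply: trapezoid_tent => //; [rewrite psumS; have := g_ge0 k; lra | exact: apex_node].
Qed.

Lemma trapezoid_circle_tent m i r : (i <= m)%N -> 0 <= r -> 2 * r <= X m ->
  2 * r ^+ 2 <= \sum_(0 <= k < m)
    g k * (circle_tent (X m) (X i) r (X k) + circle_tent (X m) (X i) r (X k.+1)).
Proof.
move=> im r0 rP; have le_m k : (k <= m)%N -> X k <= X m by apply: psum_le.
have nodes_mid k : (k < m)%N -> X k.+1 <= X i \/ X i <= X k.
  by move=> _; case: (ltnP k i) => ki; [left|right]; apply: psum_le.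
have nodes_left k : (k < m)%N -> X k.+1 <= X i - X m \/ X i - X m <= X k.
  by move=> _; right; have := psum_ge0 k; have := le_m i im; lra.
have nodes_right k : (k < m)%N -> X k.+1 <= X i + X m \/ X i + X m <= X k.
  by move=> km; left; have := le_m k.+1 km; have := psum_ge0 i; lra.
pose S c := \sum_(0 <= k < m) g k * (tent c r (X k) + tent c r (X k.+1)).
have -> : \sum_(0 <= k < m)
    g k * (circle_tent (X m) (X i) r (X k) + circle_tent (X m) (X i) r (X k.+1)) =
    S (X i) + S (X i - X m) + S (X i + X m).
  by rewrite -!big_split /=; apply: eq_bigr => k _; rewrite /circle_tent; ring.
have := trapezoid_tent_sum r0 nodes_mid; have := trapezoid_tent_sum r0 nodes_left.
have := trapezoid_tent_sum r0 nodes_right.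
have := @tent_prim_circle _ (X i) r (X m); rewrite psum_ge0 le_m // => /(_ isT r0 rP).
rewrite /S; lra.
Qed.

End Partition.

Lemma disjoint_intervals_sum (R : realFieldType) (x s : nat -> R) (m : nat) (A B : R) :
  A <= B -> (forall j, (j < m)%N -> 0 <= s j) ->
  (forall j, (j < m)%N -> 0 < s j -> A <= x j - s j /\ x j + s j <= B) ->
  (forall j k, (j < k < m)%N -> 0 < s j -> 0 < s k -> s j + s k <= x k - x j) ->
  2 * \sum_(0 <= j < m) s j <= B - A.
Proof.
elim: m B => [|m IH] B AB s_ge0 s_in s_disj; first by rewrite big_geq //; lra.
have lt_m j : (j < m)%N -> (j < m.+1)%N by move/ltnW.
rewrite big_nat_recr //=.
case: (lerP (s m) 0) => sm.
  have -> : s m = 0 by apply/eqP; rewrite eq_le sm s_ge0.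
  rewrite addr0; apply: IH => // [j /lt_m|j /lt_m|j k /andP[jk /lt_m]]; first exact: s_ge0.
    exact: s_in.
  by move=> km; apply: s_disj; rewrite jk.
have [A_le B_ge] := s_in m (ltnSn m) sm.
have : 2 * \sum_(0 <= j < m) s j <= x m - s m - A.
  apply: IH => // [j /lt_m|j jm sj|j k /andP[jk /lt_m]]; first exact: s_ge0.
    have [Aj _] := s_in j (lt_m j jm) sj; split => //.
    by have := s_disj j m (introT andP (conj jm (ltnSn m))) sj sm; lra.
  by move=> km; apply: s_disj; rewrite jk.
lra.
Qed.

Section CircleOfTour.
Variable R : realFieldType.
Variable g : nat -> R.
Hypothesis g_ge0 : forall k, 0 <= g k.
Variable n : nat.
Local Notation X := (psum g).
Local Notation P := (psum g n.+1).

Lemma psum_in (i : 'I_n.+1) : 0 <= X i <= P.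
Proof. by rewrite psum_ge0 //= psum_le // ltnW. Qed.

Lemma norm_psum_sub (i j : nat) : (i <= j)%N -> `|X i - X j| = X j - X i.
Proof. by move=> ij; rewrite distrC ger0_norm // subr_ge0 psum_le. Qed.

Lemma disjoint_arcs_sum (s : 'I_n.+1 -> R) :
  (forall y, 0 <= s y) -> (forall y, 2 * s y <= P) ->
  (forall y y', y != y' -> 0 < s y -> 0 < s y' -> s y + s y' <= arc_dist P (X y) (X y')) ->
  2 * \sum_y s y <= P.
Proof.
move=> s_ge0 s_half s_disj.
case: (pickP (fun y => 0 < s y)) => [y0 sy0 | s_eq0]; last first.
  rewrite big1; first by have := psum_ge0 g_ge0 n.+1; lra.
  by move=> y _; apply/eqP; rewrite eq_le s_ge0 andbT leNgt s_eq0.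
case: (@arg_minnP _ y0 (fun y => 0 < s y) val sy0) => a sa a_min.
case: (@arg_maxnP _ y0 (fun y => 0 < s y) val sy0) => b sb b_max.
have ab : (a <= b)%N by apply: a_min.
have dist_le (y y' : 'I_n.+1) : (y <= y')%N -> y != y' -> 0 < s y -> 0 < s y' ->
    s y + s y' <= X y' - X y.
  move=> yy' ne sy sy'; rewrite -norm_psum_sub //.
  by have := s_disj y y' ne sy sy'; have := arc_dist_le_norm P (X y) (X y'); lra.
have span : 2 * \sum_y s y <= (X b + s b) - (X a - s a).
  have -> : \sum_y s y = \sum_(0 <= j < n.+1) s (inord j).
    by rewrite big_mkord; apply: eq_bigr => j _; rewrite inord_val.
  apply: (@disjoint_intervals_sum _ X (fun j => s (inord j))).
  - by have := psum_le g_ge0 ab; have := s_ge0 a; have := s_ge0 b; lra.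
  - by move=> j _; apply: s_ge0.
  - move=> j jn; set J : 'I_n.+1 := inord j => sj.
    have Jj : J = j :> nat by rewrite inordK.
    rewrite -Jj; split.
    + case: (eqVneq a J) => [<-|aJ]; first lra.
      by have := dist_le a J (a_min J sj) aJ sa sj; have := s_ge0 a; lra.
    + case: (eqVneq J b) => [->|Jb]; first lra.
      by have := dist_le J b (b_max J sj) Jb sj sb; have := s_ge0 b; lra.
  - move=> j k /andP[jk kn] sj sk.
    have Jj : (inord j : 'I_n.+1) = j :> nat by rewrite inordK // (ltn_trans jk).
    have Kk : (inord k : 'I_n.+1) = k :> nat by rewrite inordK.
    rewrite -{2}Jj -{2}Kk; apply: dist_le => //; first by rewrite Jj Kk ltnW.
    by apply/eqP => /(congr1 val); rewrite /= Jj Kk => jk_eq; move: jk; rewrite jk_eq ltnn.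
case: (eqVneq a b) => [eab|nab].
  by move: span; rewrite eab; have := s_half b; lra.
have := s_disj a b nab sa sb; have := arc_dist_le_wrap P (X a) (X b).
rewrite norm_psum_sub //; lra.
Qed.

Variables (r : 'I_n.+1 -> R) (sg : 'I_n.+1 -> 'I_n.+1).
Hypothesis sg_inj : injective sg.
Hypothesis r_ge0 : forall i, 0 <= r i.
Hypothesis r_half : forall i, 2 * r i <= P.
Hypothesis r_pair : forall i j, i != j ->
  r i + r j <= arc_dist P (X i) (X j) + arc_dist P (X (sg i)) (X (sg j)).

(* The radii left over at [p], [ramp (r i - d(p, X i))], give disjoint arcs around
   the points [X (sg i)], by [r_pair] and the triangle inequality through [p]. *)
Lemma circle_tents_sum_le p : 0 <= p <= P ->
  2 * \sum_(i < n.+1) circle_tent P (X i) (r i) p <= P.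
Proof.
move=> pP; have /andP[p0 p_le] := pP.
pose w (i : 'I_n.+1) := ramp (r i - arc_dist P p (X i)).
have tent_le_w : \sum_(i < n.+1) circle_tent P (X i) (r i) p <= \sum_(i < n.+1) w i.
  by apply: ler_sum => i _; apply: circle_tent_le; rewrite ?psum_in.
suff : 2 * \sum_y w (invF sg_inj y) <= P.
  by rewrite (reindex_inj sg_inj) /=; under eq_bigr do rewrite invF_f; lra.
apply: disjoint_arcs_sum => [y|y|y y' yy' wy wy'].
- exact: ramp_ge0.
- have := r_half (invF sg_inj y); suff : w (invF sg_inj y) <= r (invF sg_inj y) by lra.
  by apply: ramp_le => //; have := arc_dist_ge0 pP (psum_in (invF sg_inj y)); lra.
- set i := invF sg_inj y in wy *; set j := invF sg_inj y' in wy' *.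
  have ij : i != j by apply: contra_neq yy' => eq_ij; rewrite -(f_invF sg_inj y) -/i eq_ij f_invF.
  have := r_pair ij; rewrite /i /j !f_invF -/i -/j.
  move: wy wy'; rewrite /w => /ramp_gt0 -> /ramp_gt0 ->.
  have := arc_dist_triangle (psum_in i) (psum_in j) pP.
  by rewrite (arc_distC P (X i) p); lra.
Qed.

(* Integrating [circle_tents_sum_le] over the circle, by the trapezoid rule at the
   nodes [X k], each [circle_tent] contributes its area [r i ^+ 2]. *)
Lemma sum_sqr_radii_le : 2 * \sum_(i < n.+1) r i ^+ 2 <= P ^+ 2.
Proof.
rewrite [P ^+ 2]expr2.
pose T (i : 'I_n.+1) p := circle_tent P (X i) (r i) p.
have node_le k : (k <= n.+1)%N -> 2 * \sum_(i < n.+1) T i (X k) <= P.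
  by move=> kn; apply: circle_tents_sum_le; rewrite psum_ge0 // psum_le.
apply: (@le_trans _ _ (\sum_(i < n.+1) \sum_(0 <= k < n.+1) g k * (T i (X k) + T i (X k.+1)))).
  rewrite mulr_sumr; apply: ler_sum => i _.
  by apply: trapezoid_circle_tent => //; apply: ltnW.
rewrite exchange_big /= -[P in P * _]/(\sum_(0 <= k < n.+1) g k) mulr_suml.
apply: ler_sum_nat => k /andP[_ kn]; rewrite -mulr_sumr big_split /=.
apply: ler_wpM2l => //.
by have := node_le k (ltnW kn); have := node_le k.+1 kn; lra.
Qed.

End CircleOfTour.

Lemma sqr_sum_le (R : realFieldType) (m : nat) (x : 'I_m -> R) :
  (\sum_i x i) ^+ 2 <= m%:R * \sum_i x i ^+ 2.
Proof.
have : 0 <= \sum_i \sum_(j : 'I_m) (x i - x j) ^+ 2.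
  by apply: sumr_ge0 => i _; apply: sumr_ge0 => j _; apply: sqr_ge0.
suff -> : \sum_i \sum_(j : 'I_m) (x i - x j) ^+ 2 =
    2 * (m%:R * \sum_i x i ^+ 2 - (\sum_i x i) ^+ 2) by lra.
have -> : \sum_i \sum_(j : 'I_m) (x i - x j) ^+ 2 =
    \sum_i \sum_(j : 'I_m) (x i ^+ 2 + x j ^+ 2 - 2 * (x i * x j)).
  by apply: eq_bigr => i _; apply: eq_bigr => j _; rewrite !expr2; ring.
have -> : \sum_i \sum_(j : 'I_m) (x i ^+ 2 + x j ^+ 2 - 2 * (x i * x j)) =
    \sum_i (m%:R * x i ^+ 2 + \sum_(j : 'I_m) x j ^+ 2 - 2 * (x i * \sum_(j : 'I_m) x j)).
  apply: eq_bigr => i _.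
  rewrite sumrB big_split /= sumr_const card_ord -mulr_sumr -mulr_sumr.
  by rewrite -(mulr_natl (x i ^+ 2) m).
rewrite sumrB big_split /= -mulr_sumr sumr_const card_ord -mulr_sumr -mulr_suml.
rewrite -mulr_natl expr2; ring.
Qed.

Lemma ler_sqrt_mul (R : rcfType) (a x y : R) : 0 <= a -> 0 <= x -> 0 <= y ->
  x ^+ 2 <= a * y ^+ 2 -> x <= Num.sqrt a * y.
Proof.
move=> a0 x0 y0 le_sqr.
rewrite -(ger0_norm x0) -sqrtr_sqr -(ger0_norm y0) -sqrtr_sqr -sqrtrM //.
exact: ler_wsqrtr.
Qed.

Definition tour_edge (R : realFieldType) (n : nat) (c : 'I_n.+1 -> 'I_n.+1 -> R)
  (t : {perm 'I_n.+1}) (k : nat) := c (t (inord k)) (t (inord k.+1)).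

Lemma ordS_inord (n : nat) (i : 'I_n.+1) : ordS i = inord i.+1.
Proof.
apply: ord_inj; rewrite /= /inord val_insubd; case: ltnP => [lt_n|ge_n].
  by rewrite modn_small.
have -> : i.+1 = n.+1 by have := ltn_ord i; lia.
by rewrite modnn.
Qed.

Section TourOnCircle.
Variables (R : realFieldType) (n : nat) (c : 'I_n.+1 -> 'I_n.+1 -> R) (t : {perm 'I_n.+1}).
Hypothesis c_metric : metric_tsp c.
Local Notation X := (psum (tour_edge c t)).
Local Notation L := (psum (tour_edge c t) n.+1).

Lemma tour_edge_ge0 k : 0 <= tour_edge c t k.
Proof. by case: c_metric => _ [_ [c_ge0 _]]; apply: c_ge0. Qed.

Lemma tour_length_psum : tour_length c t = L.
Proof.
rewrite /tour_length /psum big_mkord; apply: eq_bigr => i _.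
by rewrite /tour_edge ordS_inord inord_val.
Qed.

Lemma metric_le_psum a b : (a <= b)%N -> c (t (inord a)) (t (inord b)) <= X b - X a.
Proof.
case: c_metric => c0 [_ [_ c_tri]].
move=> /subnK <-; elim: (b - a)%N => [|d IH]; first by rewrite add0n c0 subrr.
rewrite addSn psumS; have := c_tri (t (inord a)) (t (inord (d + a))) (t (inord (d + a).+1)).
rewrite -/(tour_edge c t (d + a)); lra.
Qed.

(* Both arcs of the tour [t] between two cities are paths in the metric. *)
Lemma metric_le_arc_dist (i j : 'I_n.+1) : c (t i) (t j) <= arc_dist L (X i) (X j).
Proof.
case: c_metric => _ [c_sym [_ c_tri]].
wlog ij : i j / (i <= j)%N.
  move=> hwlog; case: (leqP i j) => [/hwlog //|/ltnW ji].
  by rewrite c_sym arc_distC; apply: hwlog.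
have t_wrap : t (inord n.+1) = t (inord 0).
  by congr (t _); apply: ord_inj; rewrite /= /inord !val_insubd ltnn ltn0Sn.
apply: le_arc_dist; rewrite (norm_psum_sub tour_edge_ge0 ij).
  by have := metric_le_psum ij; rewrite !inord_val.
have le_i : c (t (inord 0)) (t i) <= X i.
  by have := metric_le_psum (leq0n i); rewrite psum0 inord_val subr0.
have le_j : c (t j) (t (inord 0)) <= L - X j.
  by have := metric_le_psum (ltnW (ltn_ord j)); rewrite t_wrap inord_val.
rewrite c_sym; have := c_tri (t j) (t (inord 0)) (t i); lra.
Qed.

End TourOnCircle.

Section TwoOptimalTour.
Variables (R : rcfType) (n : nat) (c : 'I_n.+1 -> 'I_n.+1 -> R) (T Tstar : {perm 'I_n.+1}).
Hypothesis c_metric : metric_tsp c.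
Hypothesis T_opt : two_optimal c T.

(* Index the edges of [T] by the position along [Tstar] of their tail. *)
Let head i := T (ordS ((T^-1)%g (Tstar i))).
Let r i := c (Tstar i) (head i).
Let sg i := (Tstar^-1)%g (head i).

Lemma tour_length_heads : tour_length c T = \sum_i r i.
Proof.
rewrite /tour_length (reindex_inj (h := fun i => (T^-1)%g (Tstar i))) /=; last first.
  by move=> i j /perm_inj /perm_inj.
by apply: eq_bigr => i _; rewrite /r /head permKV.
Qed.

Lemma head_pair i j : i != j -> r i + r j <= c (Tstar i) (Tstar j) + c (head i) (head j).
Proof.
move=> ij; have Tij : (T^-1)%g (Tstar i) != (T^-1)%g (Tstar j).
  by apply: contra_neq ij => /perm_inj /perm_inj.
by have := T_opt Tij; rewrite !permKV.
Qed.

Local Notation X := (psum (tour_edge c Tstar)).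
Local Notation L := (psum (tour_edge c Tstar) n.+1).

Lemma two_optimal_sum_sqr : 2 * \sum_i r i ^+ 2 <= tour_length c Tstar ^+ 2.
Proof.
have [_ [_ [c_ge0 _]]] := c_metric.
have dist i j : c (Tstar i) (Tstar j) <= arc_dist L (X i) (X j).
  exact: metric_le_arc_dist.
have head_sg i : head i = Tstar (sg i) by rewrite /sg permKV.
rewrite tour_length_psum.
apply: (sum_sqr_radii_le (tour_edge_ge0 Tstar c_metric) (sg := sg)).
- by move=> i j /perm_inj /perm_inj /ordS_inj /perm_inj /perm_inj.
- by move=> i; apply: c_ge0.
- move=> i; rewrite /r head_sg.
  by have := dist i (sg i); have := arc_dist_le_half L (X i) (X (sg i)); lra.
- move=> i j ij; have := head_pair ij; rewrite !head_sg.
  by have := dist i j; have := dist (sg i) (sg j); lra.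
Qed.

Lemma two_optimal_tour_length_le :
  tour_length c T <= Num.sqrt (n.+1%:R / 2) * tour_length c Tstar.
Proof.
have [_ [_ [c_ge0 _]]] := c_metric.
have L_ge0 (t : {perm 'I_n.+1}) : 0 <= tour_length c t by apply: sumr_ge0 => i _.
apply: ler_sqrt_mul => //; first by rewrite divr_ge0.
rewrite tour_length_heads; apply: (le_trans (sqr_sum_le r)).
rewrite -mulrA ler_pM2l ?ltr0n //; have := two_optimal_sum_sqr; lra.
Qed.

End TwoOptimalTour.

Lemma mod_addr_inj (k a b x : nat) : (a < k)%N -> (b < k)%N ->
  ((a + x) %% k = (b + x) %% k)%N -> a = b.
Proof. by move=> ak bk /eqP; rewrite eqn_modDr !modn_small // => /eqP. Qed.

Lemma val_iter_ordS (N : nat) (b : 'I_N) j : iter j (@ordS N) b = ((b + j) %% N)%N :> nat.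
Proof.
elim: j => [|j IH] /=; first by rewrite addn0 modn_small.
by rewrite IH addnS -addn1 modnDml addn1.
Qed.

Lemma exists_ordS_switch (N : nat) (f : 'I_N -> bool) a b : f a -> ~~ f b ->
  exists i, ~~ f i && f (ordS i).
Proof.
move=> fa fb.
case: (pickP (fun i => ~~ f i && f (ordS i))) => [i fi | no_switch]; first by exists i.
have step i : ~~ f i -> ~~ f (ordS i).
  by move=> fi; have := no_switch i; rewrite /= fi /= => ->.
have iter_false j : ~~ f (iter j (@ordS N) b) by elim: j => [|j IH] //=; apply: step.
suff back_to_a : iter (a + (N - b)) (@ordS N) b = a.
  by move: (iter_false (a + (N - b))%N); rewrite back_to_a fa.
apply: ord_inj; rewrite val_iter_ordS.
have := ltn_ord b; have := ltn_ord a => aN bN.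
by rewrite (_ : b + _ = a + N)%N ?modnDr ?modn_small //; lia.
Qed.

Section ClusterMetric.
Variable R : realFieldType.

Definition cluster_dist (a b : nat) : R :=
  if a == b then 0 else if odd a == odd b then 2 else 1.

Lemma cluster_dist_ge0 a b : 0 <= cluster_dist a b.
Proof. by rewrite /cluster_dist; case: ifP => _ //; case: ifP. Qed.

Lemma cluster_dist_ge1 a b : a != b -> 1 <= cluster_dist a b.
Proof. by rewrite /cluster_dist => /negbTE ->; case: ifP => _ //; rewrite ler1n. Qed.

Lemma cluster_dist_le2 a b : cluster_dist a b <= 2.
Proof. by rewrite /cluster_dist; case: ifP => _; [lra|case: ifP => _; lra]. Qed.

Lemma cluster_dist_odd a b : odd a != odd b -> cluster_dist a b = 1.
Proof.
by move=> ab; rewrite /cluster_dist (negbTE ab); case: eqP => // eq_ab; rewrite eq_ab eqxx in ab.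
Qed.

Lemma cluster_dist_even a b : odd a = odd b -> cluster_dist a b = if a == b then 0 else 2.
Proof. by move=> ab; rewrite /cluster_dist ab eqxx. Qed.

Lemma cluster_distC a b : cluster_dist a b = cluster_dist b a.
Proof. by rewrite /cluster_dist eq_sym [odd a == _]eq_sym. Qed.

Lemma cluster_dist_triangle a b e : cluster_dist a e <= cluster_dist a b + cluster_dist b e.
Proof.
case: (eqVneq a e) => [->|ae]; first by rewrite /cluster_dist eqxx addr_ge0 ?cluster_dist_ge0.
case: (eqVneq a b) => [->|ab]; first by rewrite {2}/cluster_dist eqxx add0r.
case: (eqVneq b e) => [->|be]; first by rewrite {3}/cluster_dist eqxx addr0.
by have := cluster_dist_ge1 ab; have := cluster_dist_ge1 be; have := cluster_dist_le2 a e; lra.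
Qed.

End ClusterMetric.

Lemma cluster_dist_ge_entries (R : realFieldType) (N a b : nat) :
  \sum_(m < N) ((a != m) && (b == m))%:R <= cluster_dist R a b.
Proof.
case: (eqVneq a b) => [<-|ab].
  by rewrite big1 ?cluster_dist_ge0 // => m _; case: eqP => //= ->; rewrite eqxx.
apply: le_trans (cluster_dist_ge1 R ab).
case: (ltnP b N) => [bN|Nb].
  rewrite (bigD1 (Ordinal bN)) //= eqxx ab big1 ?addr0 // => m /negbTE m_b.
  by rewrite [b == m]eq_sym (_ : (m == b :> nat) = false) ?andbF //; apply: m_b.
rewrite big1 ?ler01 // => m _; rewrite (_ : b == m = false) ?andbF //.
by apply/eqP; have := ltn_ord m; lia.
Qed.

Section TightExample.
Variable k : nat.
Hypothesis k_gt0 : (0 < k)%N.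
Local Notation n := (2 * k ^ 2)%N.

(* Position [s = 2 (u k + v) + e] of the 2-optimal tour is step [v] of round [u]; the tour
   goes from cluster [2 v] to cluster [2 (u + v mod k) + 1] and on to [2 (v + 1 mod k)],
   visiting city [u] of each cluster in round [u]. *)
Definition walk_round (s : nat) := (s./2 %/ k)%N.
Definition walk_step (s : nat) := (s./2 %% k)%N.

Definition walk_cluster (s : nat) :=
  if odd s then ((walk_round s + walk_step s) %% k).*2.+1 else (walk_step s).*2.

Definition walk_city (s : nat) := (k * walk_cluster s + walk_round s)%N.

Lemma walk_round_lt s : (s < n)%N -> (walk_round s < k)%N.
Proof. by move=> sn; rewrite /walk_round ltn_divLR //; nia. Qed.

Lemma walk_step_lt s : (walk_step s < k)%N.
Proof. exact: ltn_pmod. Qed.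

Lemma walk_cluster_lt s : (walk_cluster s < 2 * k)%N.
Proof.
have := walk_step_lt s; have := @ltn_pmod (walk_round s + walk_step s) k k_gt0.
by rewrite /walk_cluster; case: ifP => _; lia.
Qed.

Lemma odd_walk_cluster s : odd (walk_cluster s) = odd s.
Proof. by rewrite /walk_cluster; case: ifP => /=; rewrite odd_double. Qed.

Lemma walk_city_lt s : (s < n)%N -> (walk_city s < n)%N.
Proof.
move=> sn; apply: (@leq_trans (k * (walk_cluster s).+1)).
  by rewrite /walk_city mulnS addnC ltn_add2r walk_round_lt.
by rewrite expnS expn1 mulnCA leq_mul2l walk_cluster_lt orbT.
Qed.

Lemma walk_city_div s : (s < n)%N -> (walk_city s %/ k)%N = walk_cluster s.
Proof. by move=> sn; rewrite /walk_city mulnC divnMDl // divn_small ?addn0 // walk_round_lt. Qed.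

Lemma walk_city_mod s : (s < n)%N -> (walk_city s %% k)%N = walk_round s.
Proof. by move=> sn; rewrite /walk_city mulnC modnMDl modn_small // walk_round_lt. Qed.

Lemma walk_decomp s : s = ((walk_round s * k + walk_step s).*2 + odd s)%N.
Proof. by rewrite /walk_round /walk_step -divn_eq; lia. Qed.

Lemma walk_inj s s' :
  walk_cluster s = walk_cluster s' -> walk_round s = walk_round s' -> s = s'.
Proof.
move=> eq_cl eq_u.
have eq_odd : odd s = odd s' by rewrite -(odd_walk_cluster s) eq_cl odd_walk_cluster.
suff eq_v : walk_step s = walk_step s'.
  by rewrite (walk_decomp s) (walk_decomp s') eq_u eq_v eq_odd.
move: eq_cl; rewrite /walk_cluster -eq_odd eq_u.
case: (odd s) => [/succn_inj /double_inj|/double_inj //].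
by rewrite !(addnC (walk_round s')) => /mod_addr_inj; apply; apply: walk_step_lt.
Qed.

Definition walk_ord (s : 'I_n) : 'I_n := Ordinal (walk_city_lt (ltn_ord s)).

Lemma walk_ord_inj : injective walk_ord.
Proof.
move=> s s' /(congr1 val) /= eq_city; apply: ord_inj; apply: walk_inj.
  by rewrite -(walk_city_div (ltn_ord s)) eq_city walk_city_div.
by rewrite -(walk_city_mod (ltn_ord s)) eq_city walk_city_mod.
Qed.

Definition walk : {perm 'I_n} := perm walk_ord_inj.

Lemma walk_cluster_of s : (walk s %/ k)%N = walk_cluster s.
Proof. by rewrite permE /= walk_city_div. Qed.

Lemma ordS_even (s : 'I_n) : ~~ odd s -> ordS s = s.+1 :> nat.
Proof. by move=> ev /=; rewrite modn_small //; have := ltn_ord s; lia. Qed.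

Lemma odd_ordS (s : 'I_n) : odd (ordS s) = ~~ odd s.
Proof.
case: (boolP (odd s)) => [od|ev]; last by rewrite ordS_even //= ev.
rewrite /=; case: (ltnP s.+1 n) => [lt|ge]; first by rewrite modn_small //= od.
have -> : s.+1 = n by have := ltn_ord s; lia.
by rewrite modnn.
Qed.

Lemma walk_cluster_ordS_even (s : 'I_n) : ~~ odd s ->
  walk_cluster (ordS s) = ((walk_round s + walk_step s) %% k).*2.+1.
Proof.
move=> ev; have half_S : (ordS s)./2 = s./2 by rewrite ordS_even //; lia.
by rewrite /walk_cluster odd_ordS ev /walk_round /walk_step half_S.
Qed.

Lemma walk_cluster_ordS_odd (s : 'I_n) : odd s ->
  walk_cluster (ordS s) = (((s./2).+1) %% k).*2.
Proof.
move=> od; rewrite /walk_cluster odd_ordS od /walk_step /=.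
case: (ltnP s.+1 n) => [lt|ge].
  by rewrite (modn_small lt) (_ : s.+1./2 = (s./2).+1) //; lia.
have -> : s.+1 = n by have := ltn_ord s; lia.
have -> : (s./2).+1 = (k * k)%N by have := ltn_ord s; lia.
by rewrite modnn /= mod0n modnMl.
Qed.

Lemma walk_edge_inj (s s' : 'I_n) : odd s = odd s' -> walk_cluster s = walk_cluster s' ->
  walk_cluster (ordS s) = walk_cluster (ordS s') -> s = s'.
Proof.
move=> eq_odd eq_cl eq_next; apply: ord_inj; apply: walk_inj => //.
have u_lt (t : 'I_n) : (walk_round t < k)%N by apply: walk_round_lt.
case: (boolP (odd s)) => [od|ev].
- have od' : odd s' by rewrite -eq_odd.
  move: eq_next; rewrite !walk_cluster_ordS_odd // => /double_inj eq_next.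
  have eq_v : walk_step s = walk_step s'.
    apply: (@mod_addr_inj k _ _ 1); try exact: walk_step_lt.
    by rewrite /walk_step !modnDml !addn1.
  move: eq_cl; rewrite /walk_cluster od od' eq_v => /succn_inj /double_inj.
  by move=> /mod_addr_inj; apply; apply: u_lt.
- have ev' : ~~ odd s' by rewrite -eq_odd.
  move: eq_cl; rewrite /walk_cluster (negbTE ev) (negbTE ev') => /double_inj eq_v.
  move: eq_next; rewrite !walk_cluster_ordS_even // eq_v => /succn_inj /double_inj.
  by move=> /mod_addr_inj; apply; apply: u_lt.
Qed.

Lemma tour_enters_cluster (t : {perm 'I_n}) (m : 'I_(2 * k)) :
  exists i, ((t i %/ k)%N != m) && ((t (ordS i) %/ k)%N == m).
Proof.
have m_lt := ltn_ord m.
have in_m_lt : (k * m < n)%N by rewrite expnS expn1 mulnCA ltn_mul2l k_gt0.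
have k_lt_n : (k < n)%N by rewrite expnS expn1 mulnCA -{1}[k]muln1 ltn_mul2l k_gt0 /=; lia.
have out_m_lt : ((if m == 0 :> nat then k else 0) < n)%N.
  by case: ifP => _ //; apply: leq_ltn_trans k_lt_n.
(* City [k m] is in cluster [m]; city [k] or [0] is not. *)
apply: (@exists_ordS_switch _ (fun i => (t i %/ k)%N == m)
  ((t^-1)%g (Ordinal in_m_lt)) ((t^-1)%g (Ordinal out_m_lt))); rewrite permKV /=.
  by rewrite mulKn.
by case: ifP => m0; rewrite ?divnn ?k_gt0 ?(eqP m0) // div0n eq_sym m0.
Qed.

Section Cost.
Variable R : realFieldType.

Definition cluster_cost (x y : 'I_n) : R := cluster_dist R (x %/ k) (y %/ k).

Lemma cluster_cost_metric : metric_tsp cluster_cost.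
Proof.
split; first by move=> x; rewrite /cluster_cost /cluster_dist eqxx.
split; first by move=> x y; apply: cluster_distC.
by split=> [x y|x y z]; [apply: cluster_dist_ge0 | apply: cluster_dist_triangle].
Qed.

Lemma walk_edge_cost (s : 'I_n) : cluster_cost (walk s) (walk (ordS s)) = 1.
Proof.
rewrite /cluster_cost !walk_cluster_of cluster_dist_odd //.
by rewrite !odd_walk_cluster odd_ordS; case: odd.
Qed.

Lemma walk_length : tour_length cluster_cost walk = n%:R.
Proof.
by rewrite /tour_length; under eq_bigr do rewrite walk_edge_cost; rewrite sumr_const card_ord.
Qed.

(* Two edges of [walk] whose tails have the same parity join clusters at distance
   0 or 2 after the exchange, and not both 0 by [walk_edge_inj]. *)
Lemma walk_two_optimal : two_optimal cluster_cost walk.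
Proof.
move=> i j ij; rewrite !walk_edge_cost /cluster_cost !walk_cluster_of.
case: (boolP (odd i == odd j)) => [/eqP same|diff].
  rewrite !cluster_dist_even ?odd_walk_cluster ?odd_ordS ?same //.
  case: eqP => [eq_cl|_]; case: eqP => [eq_next|_]; try lra.
  by move: ij; rewrite (walk_edge_inj same eq_cl eq_next) eqxx.
rewrite !cluster_dist_odd; first lra.
all: by rewrite !odd_walk_cluster ?odd_ordS; move: diff; case: odd; case: odd.
Qed.

Lemma id_edge_cost (p : 'I_n) : cluster_cost p (ordS p) = (k %| p.+1)%:R.
Proof.
rewrite /cluster_cost /=; case: (ltnP p.+1 n) => [lt|ge].
  rewrite modn_small // divnS //; case: (k %| p.+1)%N => /=.
    by rewrite cluster_dist_odd // oddD /=; case: odd.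
  by rewrite add0n /cluster_dist eqxx.
have p_last : p.+1 = n by have := ltn_ord p; lia.
have k_dvd_n : (k %| n)%N by rewrite dvdn_mull // dvdn_exp.
have n_div : (n %/ k = 2 * k)%N by rewrite expnS expn1 mulnCA mulKn.
have := divnS p k_gt0; rewrite p_last k_dvd_n n_div add1n => p_div.
rewrite modnn div0n cluster_dist_odd //=.
by move: p_div; move: (p %/ k)%N => q; lia.
Qed.

Lemma id_length : tour_length cluster_cost 1%g = (2 * k)%:R.
Proof.
rewrite /tour_length; under eq_bigr do rewrite !perm1 id_edge_cost.
rewrite -natr_sum; congr _%:R.
have count_mul m : (\sum_(p < m) (k %| p.+1) = m %/ k)%N.
  elim: m => [|m IH]; first by rewrite big_ord0 div0n.
  by rewrite big_ord_recr /= IH divnS // addnC.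
by rewrite count_mul expnS expn1 mulnCA mulKn.
Qed.

Lemma cluster_tour_length_ge (t : {perm 'I_n}) : (2 * k)%:R <= tour_length cluster_cost t.
Proof.
pose enters (i : 'I_n) (m : 'I_(2 * k)) := ((t i %/ k)%N != m) && ((t (ordS i) %/ k)%N == m).
apply: (@le_trans _ _ (\sum_i \sum_m (enters i m)%:R)); last first.
  by apply: ler_sum => i _; apply: cluster_dist_ge_entries.
have -> : (2 * k)%:R = \sum_(m < 2 * k) (1 : R) by rewrite sumr_const card_ord.
rewrite exchange_big /=.
apply: ler_sum => m _; have [i enters_i] := tour_enters_cluster t m.
rewrite (bigD1 i) //= {1}/enters enters_i -[X in X <= _]addr0 lerD2l.
by apply: sumr_ge0 => j _; apply: ler0n.
Qed.

End Cost.

End TightExample.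

Theorem theorem1 (R : rcfType) :
  (forall (n : nat) (c : 'I_n -> 'I_n -> R) (T' Tstar : {perm 'I_n}),
      (3 <= n)%N -> metric_tsp c -> two_optimal c T' -> shortest_tour c Tstar ->
      tour_length c T' <= Num.sqrt (n%:R / 2) * tour_length c Tstar)
  /\
  (forall k : nat, (0 < k)%N ->
     exists (c : 'I_(2 * k ^ 2) -> 'I_(2 * k ^ 2) -> R) (T' Tstar : {perm 'I_(2 * k ^ 2)}),
       [/\ metric_tsp c, two_optimal c T', shortest_tour c Tstar,
           tour_length c T' = Num.sqrt ((2 * k ^ 2)%N%:R / 2) * tour_length c Tstar
         & 0 < tour_length c Tstar]).
Proof.
split=> [[//|n] c T' Tstar _ c_metric T'_opt _|k k_gt0].
  exact: two_optimal_tour_length_le.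
exists (@cluster_cost k R), (walk k_gt0), 1%g; split.
- exact: cluster_cost_metric.
- exact: walk_two_optimal.
- by move=> t; rewrite (id_length k_gt0); exact: (cluster_tour_length_ge k_gt0).
- have -> : (2 * k ^ 2)%N%:R / 2 = (k%:R : R) ^+ 2.
    by rewrite natrM natrX mulrAC mulfV ?mul1r // pnatr_eq0.
  by rewrite (walk_length k_gt0) (id_length k_gt0) sqrtr_sqr normr_nat -natrM; congr _%:R; lia.
- by rewrite (id_length k_gt0) ltr0n muln_gt0 k_gt0.
Qed.
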